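(* There exists a universal constant $c>0$ such that the following holds. Let $G=(V,E)$ be an infinite, connected, locally finite graph (multiple edges allowed, no self-loops), let $v\in V$ have degree $d_v$, and let $(X_t)$ be simple random walk on $G$ started at $X_0=v$. Then for every integer $t\geq 1$, $$\mathbb{P}_v(\tau_v \geq t) \geq \frac{c}{d_v\sqrt{t}}.$$
   Context: For a vertex $u$, the hitting time is $\tau_u=\min\{t\geq 1: X_t=u\}$; when $X_0=v$, $\tau_v$ is the return time to $v$. $\mathbb{P}_v$ denotes the law of simple random walk started at $v$. Simple random walk moves at each step to a uniformly chosen edge incident to the current vertex. *)

From Stdlib Require Import Reals List Relations Classical ClassicalDescription.
Import ListNotations.
Open Scope R_scope.

(* A locally finite multigraph on a vertex type V is given by
   - mult x y : number of edges between x and y,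
   - nbrs x   : a duplicate-free finite list of the neighbours of x
                (exactly the y with mult x y > 0). *)

Definition lf_multigraph (V : Type) (mult : V -> V -> nat) (nbrs : V -> list V) : Prop :=
  (forall x y, mult x y = mult y x) /\
  (forall x, mult x x = 0%nat) /\
  (forall x, NoDup (nbrs x)) /\
  (forall x y, In y (nbrs x) <-> (0 < mult x y)%nat).

Definition adj {V : Type} (mult : V -> V -> nat) : relation V :=
  fun x y => (0 < mult x y)%nat.

Definition connected_graph (V : Type) (mult : V -> V -> nat) : Prop :=
  forall x y : V, clos_refl_trans V (adj mult) x y.

Definition infinite_type (V : Type) : Prop :=
  ~ exists l : list V, forall x : V, In x l.

Definition deg {V : Type} (mult : V -> V -> nat) (nbrs : V -> list V) (x : V) : nat :=
  fold_right (fun y acc => (mult x y + acc)%nat) 0%nat (nbrs x).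

(* All possible trajectories (X_1, ..., X_n) of length n of the walk from x. *)
Fixpoint walks {V : Type} (nbrs : V -> list V) (x : V) (n : nat) : list (list V) :=
  match n with
  | O => [nil]
  | S n' => flat_map (fun u => map (cons u) (walks nbrs u n')) (nbrs x)
  end.

Fixpoint wprob {V : Type} (mult : V -> V -> nat) (nbrs : V -> list V)
         (x : V) (p : list V) : R :=
  match p with
  | nil => 1
  | u :: p' => (INR (mult x u) / INR (deg mult nbrs x)) * wprob mult nbrs u p'
  end.

Definition avoids {V : Type} (v : V) (p : list V) : bool :=
  if excluded_middle_informative (In v p) then false else true.

(* P_v(tau_v >= t) = P_v(X_1 <> v, ..., X_{t-1} <> v)
   = sum over trajectories (X_1..X_{t-1}) avoiding v of their probability. *)
Definition return_tail {V : Type} (mult : V -> V -> nat) (nbrs : V -> list V)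
           (v : V) (t : nat) : R :=
  fold_right Rplus 0
    (map (wprob mult nbrs v) (filter (avoids v) (walks nbrs v (t - 1)))).

(* Let [h x] be the probability that the walk from [x] visits [v] within [N] steps and
   [q = d_v P_v(tau_v > N + 1)].  The function [h] is superharmonic off [v] with defect [q]
   at [v], so its Dirichlet energy is at most [2 q].  Self-adjointness of the walk killed
   at [v] in l^2(deg) gives [sum_x d_x h(x) (1 - h(x)) <= N q].  Along a geodesic from [v]
   leaving the ball of radius [N], [h] falls from 1 to 0; the stretch where it crosses from
   3/4 to 1/4 is either short, and then Cauchy-Schwarz makes the energy at least of order
   1/sqrt N, or it contains sqrt N vertices with [h (1 - h) >= 3/16].  Either way
   [q >= 1 / (16 sqrt N)]. *)

From Stdlib Require Import Reals List Lra Lia Psatz.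
From Stdlib Require Import Classical ClassicalDescription Relations FunctionalExtensionality.
Import ListNotations.
Open Scope R_scope.

Definition lsum {A : Type} (f : A -> R) (l : list A) : R :=
  fold_right (fun x acc => f x + acc) 0 l.

Section ListSums.
Context {A : Type}.
Implicit Types (f g : A -> R) (l : list A).

Lemma lsum_cons f x l : lsum f (x :: l) = f x + lsum f l.
Proof. reflexivity. Qed.

Lemma lsum_app f l1 l2 : lsum f (l1 ++ l2) = lsum f l1 + lsum f l2.
Proof. induction l1 as [|x l1 IH]; simpl; [lra|]. unfold lsum in *; simpl; rewrite IH; lra. Qed.

Lemma lsum_plus f g l : lsum (fun x => f x + g x) l = lsum f l + lsum g l.
Proof. induction l as [|x l IH]; unfold lsum in *; simpl; [lra|]. rewrite IH; lra. Qed.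

Lemma lsum_scal c f l : lsum (fun x => c * f x) l = c * lsum f l.
Proof. induction l as [|x l IH]; unfold lsum in *; simpl; [lra|]. rewrite IH; lra. Qed.

Lemma lsum_minus f g l : lsum (fun x => f x - g x) l = lsum f l - lsum g l.
Proof. induction l as [|x l IH]; unfold lsum in *; simpl; [lra|]. rewrite IH; lra. Qed.

Lemma lsum_ext f g l : (forall x, In x l -> f x = g x) -> lsum f l = lsum g l.
Proof.
  induction l as [|x l IH]; intro H; [reflexivity|]. rewrite !lsum_cons.
  rewrite (H x (or_introl eq_refl)), IH; [reflexivity|].
  intros y Hy; apply H; now right.
Qed.

Lemma lsum_le f g l : (forall x, In x l -> f x <= g x) -> lsum f l <= lsum g l.
Proof.
  induction l as [|x l IH]; intro H; [simpl; lra|]. rewrite !lsum_cons.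
  apply Rplus_le_compat; [apply H; now left|].
  apply IH; intros y Hy; apply H; now right.
Qed.

Lemma lsum_const_lower f l c : (forall x, In x l -> c <= f x) -> INR (length l) * c <= lsum f l.
Proof.
  induction l as [|x l IH]; intro H; [simpl; lra|].
  rewrite lsum_cons; simpl length; rewrite S_INR.
  assert (c <= f x) by (apply H; left; auto).
  assert (INR (length l) * c <= lsum f l) by (apply IH; intros; apply H; right; auto). lra.
Qed.

Lemma lsum_zero f l : (forall x, In x l -> f x = 0) -> lsum f l = 0.
Proof.
  intro H. transitivity (INR (length l) * 0); [|ring].
  induction l as [|x l IH]; [simpl; ring|].
  rewrite lsum_cons, (H x (or_introl eq_refl)), IH by (intros y Hy; apply H; now right).
  simpl length; rewrite S_INR; ring.
Qed.

Lemma lsum_nonneg f l : (forall x, In x l -> 0 <= f x) -> 0 <= lsum f l.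
Proof.
  intro H. rewrite <- (lsum_zero (fun _ => 0) l) by auto. now apply lsum_le.
Qed.

Lemma lsum_nonzero f l : lsum f l <> 0 -> exists x, In x l /\ f x <> 0.
Proof.
  intro H. apply NNPP. intro E. apply H, lsum_zero.
  intros x Hx. apply NNPP. intro; apply E; eauto.
Qed.

Lemma lsum_term_le f l x : (forall y, In y l -> 0 <= f y) -> In x l -> f x <= lsum f l.
Proof.
  induction l as [|y l IH]; intros H Hx; [destruct Hx|]. rewrite lsum_cons.
  destruct Hx as [<-|Hx].
  - assert (0 <= lsum f l) by (apply lsum_nonneg; intros; apply H; right; auto). lra.
  - assert (0 <= f y) by (apply H; left; auto).
    assert (f x <= lsum f l) by (apply IH; auto; intros; apply H; right; auto). lra.
Qed.

Lemma lsum_le_support f l1 l2 :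
  NoDup l1 -> NoDup l2 -> (forall z, 0 <= f z) ->
  (forall z, f z <> 0 -> In z l1 -> In z l2) ->
  lsum f l1 <= lsum f l2.
Proof.
  revert l2. induction l1 as [|a l1 IH]; intros l2 N1 N2 Hp H1.
  - apply lsum_nonneg; auto.
  - inversion N1; subst. rewrite lsum_cons.
    destruct (classic (f a = 0)) as [Fa|Fa].
    + rewrite Fa, Rplus_0_l. apply IH; auto. intros z Hz Hin. apply H1; simpl; auto.
    + destruct (in_split a l2 (H1 a Fa (or_introl eq_refl))) as [la [lb ->]].
      rewrite lsum_app, lsum_cons.
      assert (lsum f l1 <= lsum f (la ++ lb)); [|rewrite lsum_app in *; lra].
      apply IH; auto.
      * eapply NoDup_remove_1; eauto.
      * intros z Hz Hin. assert (Hz' : In z (la ++ a :: lb)) by (apply H1; simpl; auto).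
        apply in_app_or in Hz'. apply in_or_app. destruct Hz' as [?|[<-|?]]; auto. contradiction.
Qed.

Lemma lsum_eq_support f l1 l2 :
  NoDup l1 -> NoDup l2 ->
  (forall z, f z <> 0 -> In z l1 -> In z l2) ->
  (forall z, f z <> 0 -> In z l2 -> In z l1) ->
  lsum f l1 = lsum f l2.
Proof.
  revert l2. induction l1 as [|a l1 IH]; intros l2 N1 N2 H1 H2.
  - symmetry. apply lsum_zero. intros x Hx. apply NNPP; intro Hf. apply (H2 x Hf Hx).
  - inversion N1; subst. rewrite lsum_cons.
    destruct (classic (f a = 0)) as [Fa|Fa].
    + rewrite Fa, Rplus_0_l. apply IH; auto.
      * intros z Hz Hin. apply H1; simpl; auto.
      * intros z Hz Hin. destruct (H2 z Hz Hin) as [<-|?]; [contradiction|auto].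
    + destruct (in_split a l2 (H1 a Fa (or_introl eq_refl))) as [la [lb ->]].
      rewrite lsum_app, lsum_cons, (IH (la ++ lb)), lsum_app; [lra|auto| | |].
      * eapply NoDup_remove_1; eauto.
      * intros z Hz Hin. assert (Hz' : In z (la ++ a :: lb)) by (apply H1; simpl; auto).
        apply in_app_or in Hz'. apply in_or_app. destruct Hz' as [?|[<-|?]]; auto. contradiction.
      * intros z Hz Hin. assert (Hz' : In z (a :: l1)).
        { apply H2; auto. apply in_app_or in Hin; apply in_or_app; simpl; tauto. }
        destruct Hz' as [<-|?]; auto. exfalso. exact (NoDup_remove_2 _ _ _ N2 Hin).
Qed.

Lemma lsum_single_support f l x :
  NoDup l -> In x l -> (forall z, f z <> 0 -> z = x) -> lsum f l = f x.
Proof.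
  intros N Hx H. transitivity (lsum f [x]); [|unfold lsum; simpl; ring].
  apply lsum_eq_support; auto.
  - repeat constructor; intros [].
  - intros z Hz _. rewrite (H z Hz). now left.
  - intros z Hz _. now rewrite (H z Hz).
Qed.

End ListSums.

Lemma lsum_swap {A B : Type} (F : A -> B -> R) (l : list A) (l' : list B) :
  lsum (fun x => lsum (F x) l') l = lsum (fun y => lsum (fun x => F x y) l) l'.
Proof.
  induction l as [|a l IH].
  - symmetry; now apply lsum_zero.
  - rewrite lsum_cons, IH, <- lsum_plus. reflexivity.
Qed.

(* Either the transition zone is short, and Cauchy-Schwarz makes the energy large,
   or it has at least [sqrt n] vertices, each contributing [3/16]. *)
Lemma sqrt_tradeoff n m q : 1 <= n -> 0 <= m -> 0 <= q ->
  1/4 <= (m + 1) * (2 * q) -> 3/16 * m <= n * q -> 1 <= 16 * sqrt n * q.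
Proof.
  intros Hn Hm Hq Henergy Hzone.
  assert (Hs1 : 1 <= sqrt n) by (rewrite <- sqrt_1; apply sqrt_le_1_alt; lra).
  assert (Hs2 : sqrt n * sqrt n = n) by (apply sqrt_sqrt; lra).
  destruct (Rle_dec (m + 1) (2 * sqrt n)) as [Hshort|Hlong].
  - nra.
  - rewrite <- Hs2 in Hzone. nra.
Qed.

Section Walk.
Context {V : Type} (mult : V -> V -> nat) (nbrs : V -> list V).
Hypothesis mult_sym : forall x y, mult x y = mult y x.
Hypothesis nbrs_nodup : forall x, NoDup (nbrs x).
Hypothesis in_nbrs : forall x y, In y (nbrs x) <-> (0 < mult x y)%nat.
Hypothesis deg_pos : forall x, (0 < deg mult nbrs x)%nat.
Variable v : V.

Definition eq_decV (x y : V) : {x = y} + {x <> y} := excluded_middle_informative (x = y).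
Definition rdeg (x : V) : R := INR (deg mult nbrs x).
Definition rmult (x y : V) : R := INR (mult x y).

Lemma rdeg_sum x : rdeg x = lsum (rmult x) (nbrs x).
Proof.
  unfold rdeg, deg, lsum. induction (nbrs x) as [|y l IH]; simpl; [reflexivity|].
  rewrite plus_INR, IH. reflexivity.
Qed.

Lemma nbrs_sym x y : In y (nbrs x) <-> In x (nbrs y).
Proof. rewrite !in_nbrs, mult_sym. tauto. Qed.

Lemma rdeg_ge1 x : 1 <= rdeg x.
Proof. apply (le_INR 1), deg_pos. Qed.

Lemma rdeg_pos x : 0 < rdeg x.
Proof. pose proof (rdeg_ge1 x); lra. Qed.

Lemma rmult_nonneg x y : 0 <= rmult x y.
Proof. apply pos_INR. Qed.

Lemma rmult_ge1 x y : In y (nbrs x) -> 1 <= rmult x y.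
Proof. intro H. apply in_nbrs in H. apply (le_INR 1). lia. Qed.

Lemma rmult_sym x y : rmult x y = rmult y x.
Proof. unfold rmult; rewrite mult_sym; reflexivity. Qed.

Lemma rmult_notin x y : ~ In y (nbrs x) -> rmult x y = 0.
Proof.
  intro H. unfold rmult. destruct (mult x y) eqn:E; [reflexivity|].
  exfalso; apply H, in_nbrs; lia.
Qed.

Lemma step_prob_nonneg x u : 0 <= rmult x u / rdeg x.
Proof. apply Rmult_le_pos; [apply rmult_nonneg | left; apply Rinv_0_lt_compat, rdeg_pos]. Qed.

Lemma step_prob_sum x : lsum (fun u => rmult x u / rdeg x) (nbrs x) = 1.
Proof.
  unfold Rdiv. rewrite (lsum_ext _ (fun u => / rdeg x * rmult x u)) by (intros; lra).
  rewrite lsum_scal, <- rdeg_sum. field. apply Rgt_not_eq, rdeg_pos.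
Qed.

(* [avoid n x] is the probability that the walk from [x] avoids [v] at times [1..n]. *)
Fixpoint avoid (n : nat) (x : V) : R :=
  match n with
  | O => 1
  | S n' => lsum (fun u => if eq_decV u v then 0 else rmult x u / rdeg x * avoid n' u) (nbrs x)
  end.

Lemma avoid_bounds n x : 0 <= avoid n x <= 1.
Proof.
  revert x; induction n as [|n IH]; intro x; simpl; [lra|]. split.
  - apply lsum_nonneg; intros u _. destruct (eq_decV u v); [lra|].
    apply Rmult_le_pos; [apply step_prob_nonneg | apply IH].
  - rewrite <- (step_prob_sum x). apply lsum_le. intros u _.
    pose proof (step_prob_nonneg x u). pose proof (IH u).
    destruct (eq_decV u v); nra.
Qed.

Lemma avoid_S_le n x : avoid (S n) x <= avoid n x.
Proof.
  revert x; induction n as [|n IH]; intro x.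
  - apply avoid_bounds.
  - simpl avoid. apply lsum_le. intros u _. destruct (eq_decV u v); [lra|].
    pose proof (step_prob_nonneg x u). specialize (IH u). simpl avoid in IH. nra.
Qed.

Lemma avoid_antimono n k x : (k <= n)%nat -> avoid n x <= avoid k x.
Proof. induction 1; [lra|]. pose proof (avoid_S_le m x). lra. Qed.

Lemma avoids_cons u p : avoids v (u :: p) = if eq_decV u v then false else avoids v p.
Proof.
  unfold avoids.
  destruct (excluded_middle_informative (In v (u :: p))) as [H|H], (eq_decV u v),
    (excluded_middle_informative (In v p)); simpl in H; intuition congruence.
Qed.

Lemma sum_map_flat_map {B C} (f : C -> R) (g : B -> list C) l :
  fold_right Rplus 0 (map f (flat_map g l)) = lsum (fun u => fold_right Rplus 0 (map f (g u))) l.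
Proof.
  induction l as [|a l IH]; [reflexivity|]. simpl flat_map.
  rewrite map_app, fold_right_app, lsum_cons, <- IH.
  generalize (fold_right Rplus 0 (map f (flat_map g l))). intro r.
  induction (map f (g a)) as [|b m IHm]; simpl; [lra|]. rewrite IHm; lra.
Qed.

Lemma filter_flat_map {B C} (p : C -> bool) (g : B -> list C) l :
  filter p (flat_map g l) = flat_map (fun u => filter p (g u)) l.
Proof. induction l as [|a l IH]; simpl; auto. rewrite filter_app, IH. reflexivity. Qed.

Lemma walk_avoid_sum n : forall x,
  fold_right Rplus 0 (map (wprob mult nbrs x) (filter (avoids v) (walks nbrs x n))) = avoid n x.
Proof.
  induction n as [|n IH]; intro x.
  - simpl. unfold avoids. destruct (excluded_middle_informative (In v [])) as [[]|]; simpl; lra.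
  - simpl walks. rewrite filter_flat_map, sum_map_flat_map. simpl avoid. apply lsum_ext. intros u _.
    assert (Hf : filter (avoids v) (map (cons u) (walks nbrs u n)) =
            if eq_decV u v then [] else map (cons u) (filter (avoids v) (walks nbrs u n))).
    { induction (walks nbrs u n) as [|p l IHl]; simpl; [destruct (eq_decV u v); auto|].
      rewrite avoids_cons. destruct (eq_decV u v); auto.
      destruct (avoids v p); simpl; rewrite IHl; auto. }
    rewrite Hf. destruct (eq_decV u v); [reflexivity|]. rewrite <- (IH u), map_map.
    simpl wprob. fold (rdeg x) (rmult x u).
    generalize (filter (avoids v) (walks nbrs u n)). intro L.
    induction L as [|p L IHL]; simpl; [ring|]. rewrite IHL. ring.
Qed.

Fixpoint ball (k : nat) : list V :=
  match k with
  | O => [v]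
  | S k' => nodup eq_decV (ball k' ++ flat_map nbrs (ball k'))
  end.

Lemma ball_nodup k : NoDup (ball k).
Proof. destruct k; simpl; [repeat constructor; intros []| apply NoDup_nodup]. Qed.

Lemma ball_S x k : In x (ball k) -> In x (ball (S k)).
Proof. intro H; simpl. apply nodup_In, in_or_app; auto. Qed.

Lemma ball_nbrs x y k : In x (ball k) -> In y (nbrs x) -> In y (ball (S k)).
Proof. intros H1 H2; simpl. apply nodup_In, in_or_app; right. apply in_flat_map; eauto. Qed.

Lemma ball_mono x k j : (k <= j)%nat -> In x (ball k) -> In x (ball j).
Proof. induction 1; auto. intro; apply ball_S; auto. Qed.

Lemma center_in_ball k : In v (ball k).
Proof. apply (ball_mono v 0); [lia | now left]. Qed.

Definition supported_in (M : nat) (g : V -> R) : Prop := forall x, g x <> 0 -> In x (ball M).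

Definition killed (f : V -> R) (x : V) : R :=
  if eq_decV x v then 0 else lsum (fun y => rmult x y / rdeg x * f y) (nbrs x).

(* [alive n x] is the probability that the walk from [x] avoids [v] at times [0..n]. *)
Definition alive (n : nat) (x : V) : R := if eq_decV x v then 0 else avoid n x.

Definition first_hit (x : V) : R := alive 0 x - alive 1 x.

Definition inner (K : nat) (f g : V -> R) : R := lsum (fun x => rdeg x * f x * g x) (ball K).

Lemma killed_center f : killed f v = 0.
Proof. unfold killed. destruct (eq_decV v v); congruence. Qed.

Lemma alive_center n : alive n v = 0.
Proof. unfold alive. destruct (eq_decV v v); congruence. Qed.

Lemma alive_S n : alive (S n) = killed (alive n).
Proof.
  apply functional_extensionality. intro x. unfold alive, killed.
  destruct (eq_decV x v); auto. simpl avoid. apply lsum_ext. intros u _.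
  destruct (eq_decV u v); ring.
Qed.

Lemma iter_killed_alive n k : Nat.iter n killed (alive k) = alive (n + k).
Proof. induction n as [|n IH]; simpl; auto. rewrite IH, alive_S. reflexivity. Qed.

Lemma killed_minus f g : killed (fun x => f x - g x) = fun x => killed f x - killed g x.
Proof.
  apply functional_extensionality. intro x. unfold killed. destruct (eq_decV x v); [ring|].
  rewrite <- lsum_minus. apply lsum_ext. intros; ring.
Qed.

Lemma iter_killed_minus n f g :
  Nat.iter n killed (fun x => f x - g x) = fun x => Nat.iter n killed f x - Nat.iter n killed g x.
Proof. induction n as [|n IH]; simpl; auto. rewrite IH. apply killed_minus. Qed.

Lemma alive_diff k : (fun x => alive k x - alive (S k) x) = Nat.iter k killed first_hit.
Proof.
  induction k as [|k IH]; simpl; auto.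
  rewrite <- IH, killed_minus, <- !alive_S. reflexivity.
Qed.

Lemma iter_killed_center n g : g v = 0 -> Nat.iter n killed g v = 0.
Proof. intro H; destruct n; simpl; auto using killed_center. Qed.

Lemma avoid_ball n x : avoid n x <> 1 -> In x (ball n).
Proof.
  revert x; induction n as [|n IH]; intros x H; simpl in H; [lra|].
  destruct (classic (exists u, In u (nbrs x) /\ (u = v \/ avoid n u <> 1)))
    as [[u [Hu [->|Hn]]]|E].
  - apply (ball_nbrs v); [apply center_in_ball | now apply nbrs_sym].
  - apply (ball_nbrs u); [now apply IH | now apply nbrs_sym].
  - exfalso. apply H. rewrite <- (step_prob_sum x). apply lsum_ext. intros u Hu.
    destruct (eq_decV u v) as [e|ne]; [exfalso; apply E; eauto|].
    assert (avoid n u = 1) by (apply NNPP; intro; apply E; eauto). rewrite H0; ring.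
Qed.

Lemma alive_gap_supported N : supported_in N (fun x => alive 0 x - alive N x).
Proof.
  intros x. unfold alive. destruct (eq_decV x v) as [->|]; [intros; apply center_in_ball|].
  intro H. apply avoid_ball. change (avoid 0 x) with 1 in H. intro E; apply H; rewrite E; ring.
Qed.

Lemma iter_killed_supported n s g : supported_in s g -> supported_in (n + s) (Nat.iter n killed g).
Proof.
  intro Hg. induction n as [|n IH]; intros x H; [exact (Hg x H)|].
  rewrite Nat.iter_succ in H. unfold killed at 1 in H. destruct (eq_decV x v); [lra|].
  destruct (lsum_nonzero _ _ H) as [u [Hu Hf]].
  assert (Nat.iter n killed g u <> 0) by (intro E; apply Hf; rewrite E; ring).
  apply (ball_nbrs u); [now apply IH | now apply nbrs_sym].
Qed.

(* Summing a neighbour-indexed quantity over a ball that contains the support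
   together with its neighbourhood is a sum over all oriented edges, hence symmetric. *)
Lemma ball_nbrs_swap M K (f : V -> V -> R) :
  (S M <= K)%nat -> (forall x y, f x y <> 0 -> In y (ball M)) ->
  lsum (fun x => lsum (fun y => rmult x y * f x y) (nbrs x)) (ball K)
  = lsum (fun y => lsum (fun x => rmult y x * f x y) (nbrs y)) (ball K).
Proof.
  intros HK Hf.
  rewrite (lsum_ext _ (fun x => lsum (fun y => rmult x y * f x y) (ball K))).
  2:{ intros x _. apply lsum_eq_support; [apply nbrs_nodup | apply ball_nodup | |].
      - intros y Hy _. apply (ball_mono y M); [lia|].
        apply (Hf x). intro E; apply Hy; rewrite E; ring.
      - intros y Hy _. apply NNPP; intro Hn. apply Hy. rewrite rmult_notin by auto. ring. }
  rewrite lsum_swap. apply lsum_ext. intros y _.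
  rewrite (lsum_ext (fun x => rmult y x * f x y) (fun x => rmult x y * f x y))
    by (intros; rewrite rmult_sym; ring).
  apply lsum_eq_support; [apply ball_nodup | apply nbrs_nodup | |].
  - intros x Hx _. apply NNPP; intro Hn. apply Hx. rewrite rmult_sym, rmult_notin by auto. ring.
  - intros x Hx Hxy. apply (ball_mono x (S M)); auto. apply (ball_nbrs y); auto.
    apply (Hf x). intro E; apply Hx; rewrite E; ring.
Qed.

Lemma rdeg_killed x f c :
  (x = v -> c = 0) -> rdeg x * killed f x * c = lsum (fun y => rmult x y * (f y * c)) (nbrs x).
Proof.
  intro H. unfold killed. destruct (eq_decV x v) as [e|ne].
  - rewrite (H e), lsum_zero; [ring | intros; ring].
  - rewrite (Rmult_comm (rdeg x)), Rmult_assoc, Rmult_comm, <- lsum_scal.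
    apply lsum_ext. intros. field. apply Rgt_not_eq, rdeg_pos.
Qed.

Lemma killed_selfadjoint M g k :
  g v = 0 -> k v = 0 -> supported_in M g ->
  inner (S M) (killed g) k = inner (S M) g (killed k).
Proof.
  intros Hg Hk Hs. unfold inner.
  rewrite (lsum_ext _ (fun x => lsum (fun y => rmult x y * (g y * k x)) (nbrs x)))
    by (intros x _; apply rdeg_killed; intros ->; auto).
  rewrite (ball_nbrs_swap M (S M) (fun x y => g y * k x)); auto.
  - apply lsum_ext. intros y _. replace (rdeg y * g y * killed k y) with (rdeg y * killed k y * g y) by ring.
    rewrite rdeg_killed by (intros ->; auto). apply lsum_ext; intros; ring.
  - intros x y H. apply Hs. intro E; apply H; rewrite E; ring.
Qed.

Lemma iter_killed_selfadjoint n : forall K M g k,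
  g v = 0 -> k v = 0 -> supported_in M g -> (n + M < K)%nat ->
  inner K (Nat.iter n killed g) k = inner K g (Nat.iter n killed k).
Proof.
  induction n as [|n IH]; intros K M g k Hg Hk Hs HK; [reflexivity|].
  destruct K as [|K]; [lia|].
  rewrite !Nat.iter_succ, (killed_selfadjoint K); [| now apply iter_killed_center | auto | ].
  - rewrite (IH (S K) M g (killed k)), Nat.iter_swap; auto using killed_center; lia.
  - intros x Hx. apply (ball_mono x (n + M)); [lia|]. exact (iter_killed_supported n M g Hs x Hx).
Qed.

Lemma first_hit_center : first_hit v = 0.
Proof. unfold first_hit. rewrite !alive_center. ring. Qed.

Lemma rdeg_first_hit x : x <> v -> rdeg x * first_hit x = rmult x v.
Proof.
  intro Hx. unfold first_hit, alive. destruct (eq_decV x v); [contradiction|].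
  change (avoid 0 x) with 1.
  assert (E : 1 - avoid 1 x = lsum (fun u => if eq_decV u v then rmult x u / rdeg x else 0) (nbrs x)).
  { rewrite <- (step_prob_sum x). simpl avoid. rewrite <- lsum_minus. apply lsum_ext. intros u _.
    destruct (eq_decV u v); ring. }
  rewrite E. destruct (classic (In v (nbrs x))) as [Hv|Hv].
  - rewrite (lsum_single_support _ _ v (nbrs_nodup x) Hv).
    + destruct (eq_decV v v); [|congruence]. field. apply Rgt_not_eq, rdeg_pos.
    + intros z Hz. destruct (eq_decV z v); auto. lra.
  - rewrite lsum_zero, rmult_notin by (auto; intros u Hu; destruct (eq_decV u v); subst; tauto).
    ring.
Qed.

Lemma inner_first_hit K k : (1 <= K)%nat -> inner K first_hit (alive k) = rdeg v * avoid (S k) v.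
Proof.
  intro HK. unfold inner.
  rewrite (lsum_ext _ (fun x => rmult v x * alive k x)).
  2:{ intros x _. destruct (eq_decV x v) as [->|ne].
      - rewrite alive_center. ring.
      - rewrite rdeg_first_hit, rmult_sym by auto. ring. }
  simpl avoid. rewrite <- lsum_scal.
  rewrite (lsum_ext (fun u => rdeg v * _) (fun u => rmult v u * alive k u)).
  2:{ intros u _. unfold alive. destruct (eq_decV u v); [ring|]. field. apply Rgt_not_eq, rdeg_pos. }
  apply lsum_eq_support; [apply ball_nodup | apply nbrs_nodup | |].
  - intros x Hx _. apply NNPP; intro Hn. apply Hx. rewrite rmult_notin by auto. ring.
  - intros x _ Hx. apply (ball_mono x 1); auto. apply (ball_nbrs v); [now left | auto].
Qed.

Lemma inner_plus K f g k : inner K (fun x => f x + g x) k = inner K f k + inner K g k.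
Proof. unfold inner. rewrite <- lsum_plus. apply lsum_ext; intros; ring. Qed.

Lemma inner_alive_step K k : (S k < K)%nat ->
  inner K (fun x => alive k x - alive (S k) x) (alive 0) = rdeg v * avoid (S k) v.
Proof.
  intro HK. rewrite alive_diff, (iter_killed_selfadjoint k K 1);
    [| apply first_hit_center | apply alive_center | apply alive_gap_supported | lia].
  rewrite iter_killed_alive, Nat.add_0_r. apply inner_first_hit. lia.
Qed.

Lemma inner_alive_telescope K a j : (a + j < K)%nat ->
  inner K (fun x => alive a x - alive (a + j) x) (alive 0) <= INR j * (rdeg v * avoid (S a) v).
Proof.
  induction j as [|j IH]; intro HK.
  - unfold inner. rewrite lsum_zero; [simpl; lra | intros; rewrite Nat.add_0_r; ring].
  - replace (fun x => alive a x - alive (a + S j) x) with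
      (fun x => (alive a x - alive (a + j) x) + (alive (a + j) x - alive (S (a + j)) x))
      by (apply functional_extensionality; intro x; rewrite Nat.add_succ_r; ring).
    rewrite inner_plus, inner_alive_step, S_INR by lia.
    pose proof (IH ltac:(lia)). pose proof (avoid_antimono (S (a + j)) (S a) v ltac:(lia)).
    pose proof (rdeg_pos v). nra.
Qed.

(* Self-adjointness moves [N] killed steps from [alive N] onto the gap [alive 0 - alive N],
   turning it into [alive N - alive (2N)], a sum of [N] one-step return probabilities. *)
Lemma inner_alive_gap N :
  inner (2 * N + 2) (fun x => alive 0 x - alive N x) (alive N) <= INR N * (rdeg v * avoid (S N) v).
Proof.
  set (gap x := alive 0 x - alive N x).
  assert (Hgap : gap v = 0) by (unfold gap; rewrite !alive_center; ring).
  transitivity (inner (2 * N + 2) (Nat.iter N killed gap) (alive 0)).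
  - rewrite (iter_killed_selfadjoint N _ N), iter_killed_alive, Nat.add_0_r;
      auto using alive_center, alive_gap_supported; [right; reflexivity | lia].
  - unfold gap. rewrite iter_killed_minus, !iter_killed_alive, Nat.add_0_r.
    apply inner_alive_telescope. lia.
Qed.

Definition local_energy (g : V -> R) (z : V) : R :=
  lsum (fun u => rmult z u * (g z - g u) ^ 2) (nbrs z).

Lemma local_energy_nonneg g z : 0 <= local_energy g z.
Proof.
  apply lsum_nonneg. intros u _.
  pose proof (rmult_nonneg z u). pose proof (pow2_ge_0 (g z - g u)). nra.
Qed.

Lemma energy_expand g M K : supported_in M g -> (S M <= K)%nat ->
  lsum (local_energy g) (ball K) = 2 * lsum (fun x => rdeg x * g x ^ 2) (ball K)
     - 2 * lsum (fun x => lsum (fun u => rmult x u * g x * g u) (nbrs x)) (ball K).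
Proof.
  intros Hs HK.
  assert (Hsw : lsum (fun x => lsum (fun u => rmult x u * g u ^ 2) (nbrs x)) (ball K)
              = lsum (fun x => rdeg x * g x ^ 2) (ball K)).
  { rewrite (ball_nbrs_swap M K (fun _ u => g u ^ 2)); auto.
    - apply lsum_ext. intros x _. rewrite rdeg_sum, Rmult_comm, <- lsum_scal.
      apply lsum_ext; intros; ring.
    - intros x y H. apply Hs. intro E. apply H. rewrite E. ring. }
  transitivity (lsum (fun x => rdeg x * g x ^ 2) (ball K)
     - 2 * lsum (fun x => lsum (fun u => rmult x u * g x * g u) (nbrs x)) (ball K)
     + lsum (fun x => lsum (fun u => rmult x u * g u ^ 2) (nbrs x)) (ball K)); [|rewrite Hsw; ring].
  rewrite <- lsum_scal, <- lsum_minus, <- lsum_plus. apply lsum_ext. intros x _. unfold local_energy.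
  rewrite rdeg_sum, Rmult_comm, <- !lsum_scal, <- lsum_minus, <- lsum_plus.
  apply lsum_ext. intros; ring.
Qed.

Definition hit (N : nat) (x : V) : R := 1 - alive N x.

Lemma hit_supported N : supported_in N (hit N).
Proof.
  intro x. unfold hit, alive. destruct (eq_decV x v) as [->|]; [intros; apply center_in_ball|].
  intro H. apply avoid_ball. lra.
Qed.

Lemma hit_center N : hit N v = 1.
Proof. unfold hit. rewrite alive_center. ring. Qed.

(* [hit N] is superharmonic off [v] for the one-step operator, with defect
   [rdeg v * avoid (S N) v] at [v]; pairing with [hit N] bounds its energy. *)
Lemma energy_hit_le N K : (S N <= K)%nat ->
  lsum (local_energy (hit N)) (ball K) <= 2 * (rdeg v * avoid (S N) v).
Proof.
  intro HK. rewrite (energy_expand (hit N) N K (hit_supported N) HK).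
  cut (lsum (fun x => hit N x * (rdeg x * hit N x - lsum (fun u => rmult x u * hit N u) (nbrs x))) (ball K)
       <= rdeg v * avoid (S N) v).
  { intro H. rewrite (lsum_ext _ (fun x => rdeg x * hit N x ^ 2
              - lsum (fun u => rmult x u * hit N x * hit N u) (nbrs x))), lsum_minus in H; [lra|].
    intros x _. rewrite (lsum_ext (fun u => rmult x u * hit N x * hit N u)
                                  (fun u => hit N x * (rmult x u * hit N u))) by (intros; ring).
    rewrite lsum_scal. ring. }
  assert (Halive : forall x, lsum (fun u => rmult x u * alive N u) (nbrs x) = rdeg x * avoid (S N) x).
  { intro x. simpl avoid. rewrite <- lsum_scal. apply lsum_ext. intros u _.
    unfold alive. destruct (eq_decV u v); [ring|]. field. apply Rgt_not_eq, rdeg_pos. }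
  assert (Hsum : forall x, lsum (fun u => rmult x u * hit N u) (nbrs x)
                           = rdeg x - rdeg x * avoid (S N) x).
  { intro x. rewrite <- Halive, rdeg_sum, <- lsum_minus. apply lsum_ext. intros; unfold hit; ring. }
  transitivity (lsum (fun x => if eq_decV x v then rdeg v * avoid (S N) v else 0) (ball K)).
  - apply lsum_le. intros x _. rewrite Hsum. destruct (eq_decV x v) as [->|ne].
    + rewrite hit_center. lra.
    + pose proof (avoid_bounds N x). pose proof (avoid_S_le N x). pose proof (rdeg_pos x).
      unfold hit, alive. destruct (eq_decV x v); [contradiction|].
      assert (0 <= (1 - avoid N x) * rdeg x * (avoid N x - avoid (S N) x))
        by (apply Rmult_le_pos; [apply Rmult_le_pos|]; lra).
      nra.
  - right. rewrite (lsum_single_support _ _ v); [| apply ball_nodup | apply center_in_ball |].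
    + destruct (eq_decV v v); congruence.
    + intros z Hz. destruct (eq_decV z v); auto. lra.
Qed.

Fixpoint is_path (l : list V) : Prop :=
  match l with
  | x :: (y :: _) as l' => In y (nbrs x) /\ is_path l'
  | _ => True
  end.

Fixpoint path_energy (g : V -> R) (l : list V) : R :=
  match l with
  | x :: (y :: _) as l' => rmult x y * (g x - g y) ^ 2 + path_energy g l'
  | _ => 0
  end.

Fixpoint path_variation (g : V -> R) (l : list V) : R :=
  match l with
  | x :: (y :: _) as l' => Rabs (g x - g y) + path_variation g l'
  | _ => 0
  end.

Lemma path_variation_nonneg g l : 0 <= path_variation g l.
Proof.
  induction l as [|x [|y l] IH]; simpl; try lra.
  simpl in IH. pose proof (Rabs_pos (g x - g y)). lra.
Qed.

Lemma path_energy_nonneg g l : 0 <= path_energy g l.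
Proof.
  induction l as [|x [|y l] IH]; simpl; try lra.
  simpl in IH. pose proof (rmult_nonneg x y). pose proof (pow2_ge_0 (g x - g y)). nra.
Qed.

Lemma le_path_variation g ys : forall x z, In z ys -> g x <= g z + path_variation g (x :: ys).
Proof.
  induction ys as [|y ys IH]; intros x z Hz; [destruct Hz|].
  change (path_variation g (x :: y :: ys)) with (Rabs (g x - g y) + path_variation g (y :: ys)).
  pose proof (Rle_abs (g x - g y)). pose proof (path_variation_nonneg g (y :: ys)).
  destruct Hz as [<-|Hz]; [lra|]. specialize (IH y z Hz). lra.
Qed.

Lemma cauchy_schwarz_step a L n E :
  0 <= n -> 0 <= L -> 0 <= E -> L ^ 2 <= n * E -> (a + L) ^ 2 <= (n + 1) * (a ^ 2 + E).
Proof.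
  intros Hn HL HE HLE. destruct (Req_dec n 0) as [->|Hn0].
  - assert (L = 0) by nra. subst L. nra.
  - assert (2 * a * L <= n * a ^ 2 + L ^ 2 / n).
    { apply Rmult_le_reg_l with n; [lra|]. field_simplify; [|lra].
      pose proof (pow2_ge_0 (n * a - L)). nra. }
    assert (L ^ 2 / n <= E).
    { apply Rmult_le_reg_l with n; [lra|]. field_simplify; lra. }
    nra.
Qed.

Lemma path_variation_sq g ys : forall x, is_path (x :: ys) ->
  path_variation g (x :: ys) ^ 2 <= INR (length ys) * path_energy g (x :: ys).
Proof.
  induction ys as [|y ys IH]; intros x Hp; [simpl; lra|]. destruct Hp as [Hxy Hp].
  change (path_variation g (x :: y :: ys)) with (Rabs (g x - g y) + path_variation g (y :: ys)).
  change (path_energy g (x :: y :: ys)) with (rmult x y * (g x - g y) ^ 2 + path_energy g (y :: ys)).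
  simpl length; rewrite S_INR.
  pose proof (cauchy_schwarz_step (Rabs (g x - g y)) (path_variation g (y :: ys)) (INR (length ys))
    (path_energy g (y :: ys)) (pos_INR _) (path_variation_nonneg g _) (path_energy_nonneg g _)
    (IH y Hp)) as HCS.
  rewrite pow2_abs in HCS. eapply Rle_trans; [exact HCS|].
  apply Rmult_le_compat_l; [pose proof (pos_INR (length ys)); lra|].
  pose proof (rmult_ge1 x y Hxy). pose proof (pow2_ge_0 (g x - g y)). nra.
Qed.

Lemma path_energy_le g l : is_path l -> path_energy g l <= lsum (local_energy g) l.
Proof.
  induction l as [|x [|y l] IH]; intro Hp.
  - simpl; lra.
  - rewrite lsum_cons. pose proof (local_energy_nonneg g x). simpl; lra.
  - destruct Hp as [Hxy Hp]. rewrite lsum_cons.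
    change (path_energy g (x :: y :: l)) with (rmult x y * (g x - g y) ^ 2 + path_energy g (y :: l)).
    assert (rmult x y * (g x - g y) ^ 2 <= local_energy g x).
    { apply (lsum_term_le (fun u => rmult x u * (g x - g u) ^ 2)); auto.
      intros u _. pose proof (rmult_nonneg x u). pose proof (pow2_ge_0 (g x - g u)). nra. }
    specialize (IH Hp). lra.
Qed.

Definition sphere (k : nat) (y : V) : Prop :=
  In y (ball k) /\ forall j, (j < k)%nat -> ~ In y (ball j).

Lemma sphere_unique i j y : sphere i y -> sphere j y -> i = j.
Proof.
  intros [Hi Ni] [Hj Nj]. destruct (Nat.lt_trichotomy i j) as [H|[H|H]]; auto.
  - exfalso; exact (Nj i H Hi).
  - exfalso; exact (Ni j H Hj).
Qed.

Lemma sphere_pred k y : sphere (S k) y -> exists z, sphere k z /\ In y (nbrs z).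
Proof.
  intros [Hy Ny]. simpl in Hy. apply nodup_In, in_app_or in Hy. destruct Hy as [Hy|Hy].
  - exfalso; apply (Ny k); auto.
  - apply in_flat_map in Hy. destruct Hy as [z [Hz Hyz]]. exists z; repeat split; auto.
    intros j Hj Hzj. apply (Ny (S j)); [lia|]. now apply (ball_nbrs z).
Qed.

Lemma sphere_of_ball n y : In y (ball n) -> exists k, sphere k y.
Proof.
  induction n as [|n IH]; intro Hy.
  - exists 0%nat. split; auto. intros; lia.
  - destruct (classic (In y (ball n))) as [H|H]; auto.
    exists (S n). split; auto. intros j Hj Hyj. apply H. apply (ball_mono y j); auto; lia.
Qed.

Lemma reach_ball x y k : clos_refl_trans_1n V (adj mult) x y -> In x (ball k) -> exists n, In y (ball n).
Proof.
  intro H. revert k. induction H as [|x z y Hxz _ IH]; intros k Hk; eauto.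
  apply (IH (S k)). apply (ball_nbrs x); auto. now apply in_nbrs.
Qed.

Lemma is_path_snoc xs z y : is_path (xs ++ [z]) -> In y (nbrs z) -> is_path (xs ++ [z; y]).
Proof.
  induction xs as [|a [|b xs] IH]; intros Hp Hy; simpl in *; tauto.
Qed.

Lemma is_path_firstn n l : is_path l -> is_path (firstn n l).
Proof.
  revert l; induction n as [|n IH]; intros l Hp; [exact I|].
  destruct l as [|a [|b l]]; [exact I | destruct n; exact I|].
  destruct Hp as [H1 H2]. specialize (IH (b :: l) H2). destruct n; simpl in *; auto.
Qed.

Lemma is_path_app_r a b : is_path (a ++ b) -> is_path b.
Proof.
  induction a as [|x [|y a] IH]; simpl; auto; intro H.
  - destruct b; tauto.
  - apply IH. tauto.
Qed.

Lemma is_path_app_l a b : is_path (a ++ b) -> is_path a.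
Proof.
  intro H. replace a with (firstn (length a + 0) (a ++ b))
    by (rewrite firstn_app_2; simpl; apply app_nil_r).
  now apply is_path_firstn.
Qed.

Lemma geodesic k y : sphere k y ->
  exists xs, length xs = k /\ is_path (xs ++ [y]) /\
             forall i, (i <= k)%nat -> sphere i (nth i (xs ++ [y]) v).
Proof.
  revert y; induction k as [|k IH]; intros y Hy.
  - exists []. split; [reflexivity|]. split; [exact I|].
    intros i Hi. replace i with 0%nat by lia. exact Hy.
  - destruct (sphere_pred k y Hy) as [z [Hz Hzy]]. destruct (IH z Hz) as [xs [Hl [Hp Hs]]].
    exists (xs ++ [z]). rewrite <- app_assoc. simpl. split; [rewrite length_app; simpl; lia|].
    split; [now apply is_path_snoc|].
    intros i Hi. destruct (Nat.eq_dec i (S k)) as [->|Hne].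
    + rewrite app_nth2 by lia. rewrite Hl, Nat.sub_succ_l, Nat.sub_diag by lia. exact Hy.
    + specialize (Hs i ltac:(lia)). destruct (Nat.lt_ge_cases i k).
      * rewrite app_nth1 in Hs |- * by lia. exact Hs.
      * replace i with k in * by lia. rewrite app_nth2 in Hs |- * by lia.
        rewrite Hl, Nat.sub_diag in *. exact Hs.
Qed.

Lemma layered_nodup p : (forall i, (i < length p)%nat -> sphere i (nth i p v)) -> NoDup p.
Proof.
  intro Hs. apply (NoDup_nth p v). intros i j Hi Hj E.
  apply (sphere_unique i j (nth i p v)); [now apply Hs|]. rewrite E. now apply Hs.
Qed.

(* Infinite and connected: some vertex lies outside [ball (S N)], and a geodesic
   towards it leaves [ball N] after [S N] steps. *)
Lemma exit_path N : connected_graph V mult -> infinite_type V ->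
  exists ys, is_path (v :: ys) /\ NoDup (v :: ys) /\ exists z, In z ys /\ ~ In z (ball N).
Proof.
  intros Hconn Hinf.
  assert (exists y, ~ In y (ball (S N))) as [y Hy].
  { apply NNPP. intro E. apply Hinf. exists (ball (S N)). intro x. apply NNPP. intro Hx. apply E; eauto. }
  destruct (reach_ball v y 0 (clos_rt_rt1n _ _ _ _ (Hconn v y)) (center_in_ball 0)) as [n Hn].
  destruct (sphere_of_ball n y Hn) as [k Hk].
  assert (Hk1 : (S N < k)%nat).
  { destruct (Nat.lt_ge_cases (S N) k); auto. exfalso. apply Hy, (ball_mono y k); auto. apply Hk. }
  destruct (geodesic k y Hk) as [xs [Hl [Hp Hs]]].
  set (p := firstn (S (S N)) (xs ++ [y])).
  assert (Hlen : length p = S (S N)) by (unfold p; rewrite length_firstn, length_app; simpl length; lia).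
  assert (Hpre : forall i, (i <= S N)%nat -> sphere i (nth i p v)).
  { intros i Hi. unfold p. rewrite nth_firstn.
    replace (i <? S (S N))%nat with true by (symmetry; apply Nat.ltb_lt; lia). apply Hs; lia. }
  assert (Hpath : is_path p) by now apply is_path_firstn.
  assert (Hnd : NoDup p) by (apply layered_nodup; intros i Hi; apply Hpre; lia).
  assert (Hfar : ~ In (nth (S N) p v) (ball N)) by (apply (Hpre (S N)); lia).
  destruct (Hpre 0%nat ltac:(lia)) as [[H0|[]] _].
  destruct p as [|a ys]; [discriminate|]. simpl in H0, Hfar, Hlen. subst a.
  exists ys. repeat split; auto. exists (nth N ys v). split; auto. apply nth_In. lia.
Qed.

Lemma crossing_segment (g : V -> R) l : forall x pre,
  3/4 <= g x -> (forall w, In w pre -> 1/4 < g w < 3/4) -> (exists z, In z l /\ g z <= 1/4) ->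
  exists l1 x' mids z l2, x :: pre ++ l = l1 ++ (x' :: mids ++ [z]) ++ l2 /\
    3/4 <= g x' /\ g z <= 1/4 /\ forall w, In w mids -> 1/4 < g w < 3/4.
Proof.
  induction l as [|y l IH]; intros x pre Hx Hpre [z0 [Hz0 Hgz0]]; [destruct Hz0|].
  destruct (Rle_dec (g y) (1/4)) as [Hy|Hy].
  - exists [], x, pre, y, l. simpl. rewrite <- app_assoc. simpl. auto.
  - assert (Hex : exists z, In z l /\ g z <= 1/4) by (destruct Hz0 as [<-|Hz0]; [lra | eauto]).
    destruct (Rle_dec (3/4) (g y)) as [Hy'|Hy'].
    + destruct (IH y [] Hy' (fun w Hw => match Hw with end) Hex)
        as [l1 [x' [mids [z [l2 [E [H1 [H2 H3]]]]]]]].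
      exists (x :: pre ++ l1), x', mids, z, l2. split; auto.
      simpl in E. rewrite E. simpl. now rewrite <- !app_assoc.
    + destruct (IH x (pre ++ [y]) Hx) as [l1 [x' [mids [z [l2 [E [H1 [H2 H3]]]]]]]]; auto.
      * intros w Hw. apply in_app_or in Hw. destruct Hw as [Hw|[<-|[]]]; auto. lra.
      * exists l1, x', mids, z, l2. split; auto. rewrite <- E. simpl. now rewrite <- app_assoc.
Qed.

Lemma local_energy_supported g M : supported_in M g -> supported_in (S M) (local_energy g).
Proof.
  intros Hg w Hw. destruct (lsum_nonzero _ _ Hw) as [u [Hu Hf]].
  destruct (classic (g w = 0)) as [Hgw|Hgw]; [|now apply ball_S, Hg].
  assert (g u <> 0) by (intro E; apply Hf; rewrite Hgw, E; ring).
  apply (ball_nbrs u); [now apply Hg | now apply nbrs_sym].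
Qed.

Lemma crossing_energy g x mids z : is_path (x :: mids ++ [z]) -> 3/4 <= g x -> g z <= 1/4 ->
  1/4 <= (INR (length mids) + 1) * path_energy g (x :: mids ++ [z]).
Proof.
  intros Hp Hx Hz.
  pose proof (le_path_variation g (mids ++ [z]) x z ltac:(apply in_or_app; simpl; auto)).
  pose proof (path_variation_sq g (mids ++ [z]) x Hp) as HCS.
  rewrite length_app, plus_INR in HCS. simpl INR in HCS.
  pose proof (path_variation_nonneg g (x :: mids ++ [z])). nra.
Qed.

Lemma path_energy_hit N l : is_path l -> NoDup l ->
  path_energy (hit N) l <= 2 * (rdeg v * avoid (S N) v).
Proof.
  intros Hp Hnd. eapply Rle_trans; [now apply path_energy_le|].
  eapply Rle_trans; [|apply (energy_hit_le N (S N)); lia].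
  apply lsum_le_support; auto using ball_nodup, local_energy_nonneg.
  intros w Hw _. now apply (local_energy_supported (hit N) N (hit_supported N)).
Qed.

Lemma transition_zone_bound N mids : NoDup mids -> (forall w, In w mids -> 1/4 < hit N w < 3/4) ->
  3/16 * INR (length mids) <= INR N * (rdeg v * avoid (S N) v).
Proof.
  intros Hnd Hmid. eapply Rle_trans; [|apply inner_alive_gap]. unfold inner.
  apply Rle_trans with (lsum (fun x => rdeg x * (alive 0 x - alive N x) * alive N x) mids).
  - rewrite Rmult_comm. apply lsum_const_lower. intros w Hw. specialize (Hmid w Hw).
    assert (w <> v) by (intros ->; rewrite hit_center in Hmid; lra).
    assert (alive 0 w = 1) by (unfold alive; destruct (eq_decV w v); [contradiction | reflexivity]).
    assert (Halive : alive N w = 1 - hit N w) by (unfold hit; ring).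
    rewrite Halive. pose proof (rdeg_ge1 w).
    assert (3/16 <= (1 - (1 - hit N w)) * (1 - hit N w)) by nra. nra.
  - apply lsum_le_support; auto using ball_nodup.
    + intro x. pose proof (rdeg_pos x). unfold alive. destruct (eq_decV x v); [lra|].
      pose proof (avoid_bounds N x). pose proof (avoid_antimono N 0 x ltac:(lia)).
      change (avoid 0 x) with 1 in *.
      apply Rmult_le_pos; [apply Rmult_le_pos|]; lra.
    + intros x Hx _. apply (ball_mono x N); [lia|]. apply alive_gap_supported.
      intro E. apply Hx. rewrite E. ring.
Qed.

Lemma return_prob_lower N : connected_graph V mult -> infinite_type V -> (1 <= N)%nat ->
  1 <= 16 * sqrt (INR N) * (rdeg v * avoid (S N) v).
Proof.
  intros Hconn Hinf HN.
  destruct (exit_path N Hconn Hinf) as [ys [Hp [Hnd [z0 [Hz0 Hfar]]]]].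
  assert (Hz0' : hit N z0 <= 1/4).
  { assert (hit N z0 = 0) by (apply NNPP; intro E; apply Hfar; now apply hit_supported). lra. }
  destruct (crossing_segment (hit N) ys v [] ltac:(rewrite hit_center; lra)
              (fun w Hw => match Hw with end) (ex_intro _ z0 (conj Hz0 Hz0')))
    as [l1 [x [mids [z [l2 [E [Hx [Hz Hmid]]]]]]]].
  simpl in E. rewrite E in Hp, Hnd.
  assert (Hseg : is_path (x :: mids ++ [z])).
  { exact (is_path_app_l (x :: mids ++ [z]) l2 (is_path_app_r l1 _ Hp)). }
  assert (Hnd_seg : NoDup (x :: mids ++ [z])).
  { exact (NoDup_app_remove_r (x :: mids ++ [z]) l2 (NoDup_app_remove_l l1 _ Hnd)). }
  assert (Hnd_mids : NoDup mids).
  { inversion Hnd_seg as [|? ? _ Hnd']. now apply NoDup_app_remove_r in Hnd'. }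
  apply (sqrt_tradeoff (INR N) (INR (length mids))).
  - now apply (le_INR 1).
  - apply pos_INR.
  - pose proof (rdeg_pos v). pose proof (avoid_bounds (S N) v). nra.
  - pose proof (crossing_energy (hit N) x mids z Hseg Hx Hz).
    pose proof (path_energy_hit N _ Hseg Hnd_seg). pose proof (pos_INR (length mids)). nra.
  - now apply transition_zone_bound.
Qed.

End Walk.

Lemma deg_pos_of_infinite {V : Type} (mult : V -> V -> nat) (nbrs : V -> list V) :
  lf_multigraph V mult nbrs -> connected_graph V mult -> infinite_type V ->
  forall x, (0 < deg mult nbrs x)%nat.
Proof.
  intros [_ [_ [_ Hnb]]] Hconn Hinf x.
  assert (exists y, y <> x) as [y Hy].
  { apply NNPP. intro E. apply Hinf. exists [x]. intro z. left. apply NNPP. intro Hz. apply E. eauto. }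
  pose proof (clos_rt_rt1n _ _ _ _ (Hconn x y)) as Hxy.
  inversion Hxy as [|u ? Hxu _]; [congruence|].
  assert (Hin : In u (nbrs x)) by now apply Hnb. unfold adj in Hxu.
  unfold deg. induction (nbrs x) as [|a l IH]; simpl in *; [tauto|].
  destruct Hin as [->|Hin]; [|specialize (IH Hin)]; lia.
Qed.

Theorem theorem1p1 :
  exists c : R, 0 < c /\
    forall (V : Type) (mult : V -> V -> nat) (nbrs : V -> list V),
      lf_multigraph V mult nbrs ->
      connected_graph V mult ->
      infinite_type V ->
      forall (v : V) (t : nat), (1 <= t)%nat ->
        c / (INR (deg mult nbrs v) * sqrt (INR t)) <= return_tail mult nbrs v t.
Proof.
  exists (1/16). split; [lra|].
  intros V mult nbrs Hlf Hconn Hinf v t Ht.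
  pose proof (deg_pos_of_infinite mult nbrs Hlf Hconn Hinf) as Hdeg.
  destruct Hlf as [Hsym [_ [Hnd Hnb]]].
  unfold return_tail. rewrite walk_avoid_sum.
  set (N := Nat.max 1 (t - 2)).
  pose proof (return_prob_lower mult nbrs Hsym Hnd Hnb Hdeg v N Hconn Hinf ltac:(lia)) as Hret.
  pose proof (avoid_antimono mult nbrs Hdeg v (S N) (t - 1) v ltac:(lia)) as Hmono.
  pose proof (avoid_bounds mult nbrs Hdeg v (S N) v) as [HA _].
  pose proof (rdeg_pos mult nbrs Hdeg v) as Hd.
  assert (HNt : sqrt (INR N) <= sqrt (INR t)) by (apply sqrt_le_1_alt, le_INR; lia).
  assert (Hst : 0 < sqrt (INR t)) by (apply sqrt_lt_R0, lt_0_INR; lia).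
  fold (rdeg mult nbrs v).
  apply (Rmult_le_reg_l (16 * (rdeg mult nbrs v * sqrt (INR t)))); [nra|].
  replace (16 * (rdeg mult nbrs v * sqrt (INR t)) * (1 / 16 / (rdeg mult nbrs v * sqrt (INR t))))
    with 1 by (field; lra).
  eapply Rle_trans; [exact Hret|].
  replace (16 * (rdeg mult nbrs v * sqrt (INR t)) * _)
    with (16 * sqrt (INR t) * (rdeg mult nbrs v * avoid mult nbrs v (t - 1) v)) by ring.
  pose proof (sqrt_pos (INR N)).
  apply Rmult_le_compat; [lra | nra | lra | apply Rmult_le_compat_l; lra].
Qed.
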